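(* Let $x\mapsto x^{\mu-\nu}\mathbf{L}_\nu(x)/\tilde{t}_{\mu,\nu}(x)$ be considered on $(0,\infty)$. If $-\frac{3}{2}<\nu<\mu$, then this function is strictly increasing on $(0,\infty)$. If either $-3<\mu\leq-\frac{3}{2}$ and $|\nu|<\mu+3$, or $\mu>-\frac{3}{2}$ and $\mu<\nu<\mu+3$, then this function is strictly decreasing on $(0,\infty)$.
   Context: For real $\mu,\nu$ the (normalized) modified Lommel function of the first kind is $$\tilde{t}_{\mu,\nu}(x)=\sum_{k=0}^\infty\frac{(\frac{1}{2}x)^{\mu+2k+1}}{\Gamma\big(k+\frac{\mu-\nu+3}{2}\big)\Gamma\big(k+\frac{\mu+\nu+3}{2}\big)},\quad x>0,$$ and the modified Struve function of the first kind is $$\mathbf{L}_\nu(x)=\sum_{k=0}^\infty\frac{(\frac{1}{2}x)^{2k+\nu+1}}{\Gamma(k+\frac{3}{2})\Gamma(k+\nu+\frac{3}{2})}.$$ *)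

From Stdlib Require Import Reals.
From Coquelicot Require Import Coquelicot.
Open Scope R_scope.

(* Euler Gamma function, via the improper Riemann integral
   Gamma(s) = \int_0^oo t^(s-1) e^(-t) dt  (only used for s > 0). *)
Definition Gamma (s : R) : R :=
  RInt_gen (fun t => Rpower t (s - 1) * exp (- t))
           (at_right 0) (Rbar_locally p_infty).

Definition lommel_t (mu nu x : R) : R :=
  Series (fun k : nat =>
    Rpower (x / 2) (mu + 2 * INR k + 1) /
    (Gamma (INR k + (mu - nu + 3) / 2) * Gamma (INR k + (mu + nu + 3) / 2))).

Definition struveL (nu x : R) : R :=
  Series (fun k : nat =>
    Rpower (x / 2) (2 * INR k + nu + 1) /
    (Gamma (INR k + 3 / 2) * Gamma (INR k + nu + 3 / 2))).

Definition ratio (mu nu x : R) : R :=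
  Rpower x (mu - nu) * struveL nu x / lommel_t mu nu x.

From Stdlib Require Import Reals Lra Lia Classical.
From Coquelicot Require Import Coquelicot.
Open Scope R_scope.

(* Both series are powers of x/2 times power series in t = (x/2)^2 whose coefficients have the
   form 1/(Gamma(k+p) Gamma(k+q)), so the ratio is 2^(mu-nu) A(t)/B(t).  By Gamma(s+1) = s Gamma(s)
   the quotient a_k/b_k of the coefficients is multiplied at each step by a quotient of two
   quadratics in k whose difference is (mu-nu)(k + (mu+nu+6)/4); hence a_k/b_k increases when
   nu < mu and decreases when mu < nu.  A quotient of power series with positive coefficients
   inherits this monotonicity: for lam = A(z)/B(z) the coefficients of A - lam B change sign once,
   at some index m, so x^(-m) (A - lam B)(x) increases and vanishes at z. *)

Lemma Rmin_pos_le (a b x : R) : 0 < a -> 0 < b -> Rmin a b <= x -> 0 < x.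
Proof. intros Ha Hb Hx. apply Rlt_le_trans with (Rmin a b); [now apply Rmin_glb_lt | easy]. Qed.

Lemma at_right_0_lt (a : R) : 0 < a -> at_right 0 (fun t => 0 < t < a).
Proof.
  intros Ha. exists (mkposreal a Ha). intros t Ht Hpos. change (Rabs (t - 0) < a) in Ht.
  rewrite Rminus_0_r, Rabs_pos_eq in Ht by lra. lra.
Qed.

Section PositiveIntegrand.

Variable f : R -> R.
Hypothesis f_cont : forall t, 0 < t -> continuous f t.
Hypothesis f_pos : forall t, 0 < t -> 0 < f t.

Lemma ex_RInt_on_pos (a b : R) : 0 < a -> 0 < b -> ex_RInt f a b.
Proof.
  intros Ha Hb. apply (@ex_RInt_continuous R_CompleteNormedModule).
  intros t Ht. apply f_cont. now apply (Rmin_pos_le a b).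
Qed.

Lemma RInt_le_RInt_superinterval (a a' b' b : R) :
  0 < a -> a <= a' -> a' <= b' -> b' <= b -> RInt f a' b' <= RInt f a b.
Proof.
  intros Ha Haa' Hab' Hbb'.
  assert (Hle : forall c d, 0 < c <= d -> 0 <= RInt f c d).
  { intros c d Hcd. apply RInt_ge_0; [lra | apply ex_RInt_on_pos; lra |].
    intros t Ht. left. apply f_pos. lra. }
  rewrite <- (RInt_Chasles f a a' b) by (apply ex_RInt_on_pos; lra).
  rewrite <- (RInt_Chasles f a' b' b) by (apply ex_RInt_on_pos; lra).
  pose proof (Hle a a' ltac:(lra)). pose proof (Hle b' b ltac:(lra)).
  repeat change (plus ?u ?v) with (u + v). lra.
Qed.

(* The improper integral is the supremum of the integrals over the intervals [a, b] with 0 < a < 1 < b. *)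
Lemma is_RInt_gen_pos_of_bounded (M : R) :
  (forall a b, 0 < a < 1 -> 1 < b -> RInt f a b <= M) ->
  exists l, 0 < l /\ is_RInt_gen f (at_right 0) (Rbar_locally p_infty) l.
Proof.
  intros HM.
  set (E := fun y => exists a b, 0 < a < 1 /\ 1 < b /\ y = RInt f a b).
  assert (HE : E (RInt f (1/2) 2)) by (exists (1/2), 2; repeat split; lra).
  destruct (completeness E) as [L [HLub HLleast]].
  - exists M. intros y (a & b & Ha & Hb & ->). now apply HM.
  - now exists (RInt f (1/2) 2).
  - exists L. split.
    + apply Rlt_le_trans with (RInt f (1/2) 2); [|now apply HLub].
      apply RInt_gt_0; [lra | intros; apply f_pos; lra | intros; apply f_cont; lra].
    + intros P [eps HP].
      assert (Hnear : exists a0 b0, 0 < a0 < 1 /\ 1 < b0 /\ L - eps < RInt f a0 b0).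
      { apply NNPP. intros Hfar.
        assert (L <= L - eps); [|destruct eps; simpl in *; lra].
        apply HLleast. intros y (a & b & Ha & Hb & ->). apply Rnot_lt_le. intros Hlt.
        apply Hfar. now exists a, b. }
      destruct Hnear as (a0 & b0 & Ha0 & Hb0 & Hgt).
      apply Filter_prod with (fun a => 0 < a < a0) (fun b => b0 < b).
      * now apply at_right_0_lt.
      * now exists b0.
      * intros a b Ha Hb. exists (RInt f a b). split.
        -- apply (@RInt_correct R_CompleteNormedModule), ex_RInt_on_pos; lra.
        -- apply HP. change (Rabs (RInt f a b - L) < eps).
           assert (RInt f a b <= L) by (apply HLub; exists a, b; repeat split; lra).
           assert (RInt f a0 b0 <= RInt f a b) by (apply RInt_le_RInt_superinterval; lra).
           rewrite Rabs_left1 by lra. lra.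
Qed.

End PositiveIntegrand.

Definition gamma_kernel (s t : R) : R := Rpower t (s - 1) * exp (- t).

Lemma gamma_kernel_pos (s t : R) : 0 < gamma_kernel s t.
Proof. apply Rmult_lt_0_compat; apply exp_pos. Qed.

Lemma Rpower_pred (s t : R) : 0 < t -> Rpower t (s - 1) = Rpower t s / t.
Proof.
  intros Ht. unfold Rminus. rewrite Rpower_plus, Rpower_Ropp, Rpower_1 by lra. reflexivity.
Qed.

Lemma gamma_kernel_continuous (s t : R) : 0 < t -> continuous (gamma_kernel s) t.
Proof.
  intros Ht. apply (@ex_derive_continuous R_AbsRing R_NormedModule).
  unfold gamma_kernel, Rpower. auto_derive. lra.
Qed.

Lemma is_derive_gamma_kernel_succ (s t : R) : 0 < t ->
  is_derive (gamma_kernel (s + 1)) t (s * gamma_kernel s t - gamma_kernel (s + 1) t).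
Proof.
  intros Ht. unfold gamma_kernel. replace (s + 1 - 1) with s by ring.
  rewrite Rpower_pred by lra. unfold Rpower. auto_derive; [lra|]. field. lra.
Qed.

Lemma is_RInt_Rpower_pred (s a b : R) : 0 < s -> 0 < a -> 0 < b ->
  is_RInt (fun t => Rpower t (s - 1)) a b ((Rpower b s - Rpower a s) / s).
Proof.
  intros Hs Ha Hb.
  replace ((Rpower b s - Rpower a s) / s) with (Rpower b s / s - Rpower a s / s) by (field; lra).
  apply (@is_RInt_derive R_CompleteNormedModule (fun t => Rpower t s / s)).
  - intros t Ht. assert (0 < t) by now apply (Rmin_pos_le a b).
    rewrite Rpower_pred by lra. unfold Rpower. auto_derive; [lra|]. field. lra.
  - intros t Ht. assert (0 < t) by now apply (Rmin_pos_le a b).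
    apply (@ex_derive_continuous R_AbsRing R_NormedModule). unfold Rpower. auto_derive. lra.
Qed.

Lemma is_RInt_exp_opp (a b : R) : is_RInt (fun t => exp (- t)) a b (exp (- a) - exp (- b)).
Proof.
  replace (exp (- a) - exp (- b)) with (- exp (- b) - - exp (- a)) by ring.
  apply (@is_RInt_derive R_CompleteNormedModule (fun t => - exp (- t))).
  - intros t _. auto_derive; [easy | ring].
  - intros t _. apply (@ex_derive_continuous R_AbsRing R_NormedModule). auto_derive. easy.
Qed.

(* On [a, 1] the kernel is at most t^(s-1), on [1, b] at most e^(-t). *)
Lemma RInt_gamma_kernel_le (s a b : R) : 0 < s <= 1 -> 0 < a < 1 -> 1 < b ->
  RInt (gamma_kernel s) a b <= 1 / s + 1.
Proof.
  intros Hs Ha Hb.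
  assert (Hex : forall c d, 0 < c -> 0 < d -> ex_RInt (gamma_kernel s) c d).
  { intros c d Hc Hd. apply ex_RInt_on_pos; auto using gamma_kernel_continuous. }
  rewrite <- (RInt_Chasles (gamma_kernel s) a 1 b) by (apply Hex; lra).
  change (plus ?u ?v) with (u + v).
  assert (Hleft : RInt (gamma_kernel s) a 1 <= RInt (fun t => Rpower t (s - 1)) a 1).
  { apply RInt_le; [lra | apply Hex; lra | eexists; apply is_RInt_Rpower_pred; lra |].
    intros t Ht. unfold gamma_kernel. rewrite <- (Rmult_1_r (Rpower t (s - 1))) at 2.
    apply Rmult_le_compat_l; [left; apply exp_pos |].
    rewrite <- exp_0. left. apply exp_increasing. lra. }
  assert (Hright : RInt (gamma_kernel s) 1 b <= RInt (fun t => exp (- t)) 1 b).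
  { apply RInt_le; [lra | apply Hex; lra | eexists; apply is_RInt_exp_opp |].
    intros t Ht. unfold gamma_kernel. rewrite <- (Rmult_1_l (exp (- t))) at 2.
    apply Rmult_le_compat_r; [left; apply exp_pos |].
    rewrite <- (Rpower_O t) at 2 by lra. apply Rle_Rpower; lra. }
  rewrite (is_RInt_unique _ _ _ _ (is_RInt_Rpower_pred s a 1 ltac:(lra) ltac:(lra) ltac:(lra))) in Hleft.
  unfold Rpower in Hleft. rewrite ln_1, Rmult_0_r, exp_0 in Hleft.
  rewrite (is_RInt_unique _ _ _ _ (is_RInt_exp_opp 1 b)) in Hright.
  pose proof (exp_pos (- b)). pose proof (exp_increasing (- (1)) 0 ltac:(lra)).
  rewrite exp_0 in *.
  assert ((1 - exp (s * ln a)) / s <= 1 / s).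
  { apply Rmult_le_compat_r; [left; apply Rinv_0_lt_compat; lra |].
    pose proof (exp_pos (s * ln a)). lra. }
  lra.
Qed.

Lemma gamma_kernel_succ_exp (s t : R) : gamma_kernel (s + 1) t = exp (s * ln t - t).
Proof.
  unfold gamma_kernel, Rpower. replace (s + 1 - 1) with s by ring.
  now rewrite <- exp_plus.
Qed.

Lemma filterlim_scal_m_infty (s : R) : 0 < s ->
  filterlim (fun y => s * y) (Rbar_locally m_infty) (Rbar_locally m_infty).
Proof.
  intros Hs P [M HM]. exists (M / s). intros y Hy. apply HM.
  apply (Rmult_lt_compat_l s) in Hy; [|lra]. now replace (s * (M / s)) with M in Hy by (field; lra).
Qed.

Lemma filterlim_gamma_exponent_at_0 (s : R) : 0 < s ->
  filterlim (fun t => s * ln t - t) (at_right 0) (Rbar_locally m_infty).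
Proof.
  intros Hs. apply filterlim_le_m_infty with (fun t => s * ln t).
  - exists (mkposreal 1 Rlt_0_1). intros t _ Ht. lra.
  - eapply filterlim_comp; [apply is_lim_ln_0 | now apply filterlim_scal_m_infty].
Qed.

(* Since ln t / t -> 0, eventually s ln t < t / 2. *)
Lemma filterlim_gamma_exponent_at_p_infty (s : R) : 0 < s ->
  filterlim (fun t => s * ln t - t) (Rbar_locally p_infty) (Rbar_locally m_infty).
Proof.
  intros Hs. apply filterlim_le_m_infty with (fun t => - t / 2).
  - assert (Hsmall : Rbar_locally p_infty (fun t => ln t / t < / (2 * s))).
    { apply (is_lim_div_ln_p (fun y => y < / (2 * s))).
      assert (He : 0 < / (2 * s)) by (apply Rinv_0_lt_compat; lra).
      exists (mkposreal _ He). intros y Hy. change (Rabs (y - 0) < / (2 * s)) in Hy.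
      apply Rabs_def2 in Hy. lra. }
    destruct Hsmall as [M HM]. exists (Rmax M 0). intros t Ht.
    assert (Ht0 : 0 < t) by (apply Rle_lt_trans with (Rmax M 0); [apply Rmax_r | easy]).
    specialize (HM t (Rle_lt_trans _ _ _ (Rmax_l M 0) Ht)).
    apply (Rmult_lt_compat_l (2 * s * t)) in HM; [|nra].
    replace (2 * s * t * (ln t / t)) with (2 * (s * ln t)) in HM by (field; lra).
    replace (2 * s * t * / (2 * s)) with t in HM by (field; lra).
    lra.
  - intros P [M HM]. exists (- 2 * M). intros t Ht. apply HM. lra.
Qed.

Lemma filterlim_exp_of_m_infty {T : Type} (F : (T -> Prop) -> Prop) (g : T -> R) :
  filterlim g F (Rbar_locally m_infty) -> filterlim (fun t => exp (g t)) F (locally 0).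
Proof. intros Hg. eapply filterlim_comp; [exact Hg | exact is_lim_exp_m]. Qed.

Lemma filter_prod_pos :
  filter_prod (at_right 0) (Rbar_locally p_infty) (fun ab => 0 < fst ab /\ 0 < snd ab).
Proof.
  apply Filter_prod with (fun a => 0 < a) (fun b => 0 < b).
  - exists (mkposreal 1 Rlt_0_1). easy.
  - exists 0. easy.
  - easy.
Qed.

(* Integration by parts against the antiderivative t^s e^(-t), which vanishes at both ends. *)
Lemma is_RInt_gen_gamma_kernel_succ (s l : R) : 0 < s ->
  is_RInt_gen (gamma_kernel s) (at_right 0) (Rbar_locally p_infty) l ->
  is_RInt_gen (gamma_kernel (s + 1)) (at_right 0) (Rbar_locally p_infty) (s * l).
Proof.
  intros Hs Hl.
  set (F := gamma_kernel (s + 1)).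
  assert (HDF : forall t, 0 < t -> Derive F t = s * gamma_kernel s t - F t).
  { intros t Ht. now apply is_derive_unique, is_derive_gamma_kernel_succ. }
  assert (HF : is_RInt_gen (Derive F) (at_right 0) (Rbar_locally p_infty) (0 - 0)).
  { apply is_RInt_gen_Derive.
    - generalize filter_prod_pos. apply filter_imp. intros [a b] [Ha Hb] t Ht.
      eexists. apply is_derive_gamma_kernel_succ. now apply (Rmin_pos_le a b).
    - generalize filter_prod_pos. apply filter_imp. intros [a b] [Ha Hb] t Ht.
      assert (Ht0 : 0 < t) by now apply (Rmin_pos_le a b).
      apply continuous_ext_loc with (fun u => s * gamma_kernel s u - F u).
      + exists (mkposreal t Ht0). intros u Hu. change (Rabs (u - t) < t) in Hu.
        apply Rabs_def2 in Hu. symmetry. apply HDF. lra.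
      + apply (@ex_derive_continuous R_AbsRing R_NormedModule).
        unfold F, gamma_kernel, Rpower. auto_derive. lra.
    - apply (filterlim_ext (fun t => exp (s * ln t - t))); [intros; now rewrite <- gamma_kernel_succ_exp |].
      now apply filterlim_exp_of_m_infty, filterlim_gamma_exponent_at_0.
    - apply (filterlim_ext (fun t => exp (s * ln t - t))); [intros; now rewrite <- gamma_kernel_succ_exp |].
      now apply filterlim_exp_of_m_infty, filterlim_gamma_exponent_at_p_infty. }
  replace (s * l) with (minus (scal s l) (0 - 0)) by (unfold minus, plus, opp, scal; simpl; unfold mult; simpl; ring).
  eapply is_RInt_gen_ext; [| exact (is_RInt_gen_minus _ _ _ _ (is_RInt_gen_scal _ s _ Hl) HF)].
  generalize filter_prod_pos. apply filter_imp. intros [a b] [Ha Hb] t Ht.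
  rewrite HDF by (apply (Rmin_pos_le a b); simpl in *; lra).
  unfold minus, plus, opp, scal; simpl; unfold mult; simpl. unfold F. ring.
Qed.

Lemma ex_gamma_integral_le_1 (s : R) : 0 < s <= 1 ->
  exists l, 0 < l /\ is_RInt_gen (gamma_kernel s) (at_right 0) (Rbar_locally p_infty) l.
Proof.
  intros Hs. apply is_RInt_gen_pos_of_bounded with (1 / s + 1).
  - apply gamma_kernel_continuous.
  - intros; apply gamma_kernel_pos.
  - intros a b Ha Hb. now apply RInt_gamma_kernel_le.
Qed.

Lemma ex_gamma_integral (s : R) : 0 < s ->
  exists l, 0 < l /\ is_RInt_gen (gamma_kernel s) (at_right 0) (Rbar_locally p_infty) l.
Proof.
  intros Hs. destruct (INR_archimed 1 s) as [n Hn]; [lra |]. rewrite Rmult_1_r in Hn.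
  assert (Hsn : s <= INR n + 1) by lra. clear Hn.
  revert s Hs Hsn. induction n as [|n IH]; intros s Hs Hsn.
  - apply ex_gamma_integral_le_1. simpl in Hsn. lra.
  - destruct (Rle_or_lt s 1) as [Hs1 | Hs1]; [now apply ex_gamma_integral_le_1 |].
    rewrite S_INR in Hsn. destruct (IH (s - 1)) as (l & Hl & Hint); [lra | lra |].
    exists ((s - 1) * l). split; [apply Rmult_lt_0_compat; lra |].
    replace s with (s - 1 + 1) at 1 by ring. apply is_RInt_gen_gamma_kernel_succ; [lra | easy].
Qed.

Lemma Gamma_of_is_RInt_gen (s l : R) :
  is_RInt_gen (gamma_kernel s) (at_right 0) (Rbar_locally p_infty) l -> Gamma s = l.
Proof.
  apply (@is_RInt_gen_unique R_CompleteNormedModule);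
    apply Proper_StrongProper; [apply at_right_proper_filter | apply Rbar_locally_filter].
Qed.

Lemma Gamma_pos (s : R) : 0 < s -> 0 < Gamma s.
Proof.
  intros Hs. destruct (ex_gamma_integral s Hs) as (l & Hl & Hint).
  now rewrite (Gamma_of_is_RInt_gen s l Hint).
Qed.

Lemma Gamma_succ (s : R) : 0 < s -> Gamma (s + 1) = s * Gamma s.
Proof.
  intros Hs. destruct (ex_gamma_integral s Hs) as (l & Hl & Hint).
  rewrite (Gamma_of_is_RInt_gen s l Hint).
  now apply Gamma_of_is_RInt_gen, is_RInt_gen_gamma_kernel_succ.
Qed.

Lemma Series_gt_0 (u : nat -> R) (n : nat) :
  (forall k, 0 <= u k) -> 0 < u n -> ex_series u -> 0 < Series u.
Proof.
  intros Hu Hn Hex. rewrite (Series_incr_n u (S n)) by (lia || easy). simpl pred.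
  assert (Hhead : u n <= sum_f_R0 u n).
  { destruct n as [|n]; simpl; [lra |]. pose proof (cond_pos_sum u n Hu). lra. }
  assert (Htail : 0 <= Series (fun k => u (S n + k)%nat)).
  { rewrite <- (Rmult_0_l (Series (fun k => u (S n + k)%nat))), <- Series_scal_l.
    apply Series_le; [intros k; rewrite Rmult_0_l; split; [lra | apply Hu] |].
    now apply (ex_series_incr_n u (S n)). }
  lra.
Qed.

Lemma strictly_increasing_lt (c : nat -> R) :
  (forall k, c k < c (S k)) -> forall m k, (m < k)%nat -> c m < c k.
Proof.
  intros Hc m k Hmk. induction Hmk as [|k Hmk IH]; [apply Hc |].
  apply Rlt_trans with (c k); [exact IH | apply Hc].
Qed.

(* With w = r z, r > 1: z^m d(w) - w^m d(z) = sum_k z^(k+m) d_k (r^k - r^m), a sum of nonnegative terms. *)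
Lemma PSeries_sign_change_lt (d : nat -> R) (m : nat) (z w : R) :
  (forall k, (k < m)%nat -> d k <= 0) -> (forall k, (m < k)%nat -> 0 < d k) ->
  ex_pseries d z -> ex_pseries d w -> 0 < z < w ->
  w ^ m * PSeries d z < z ^ m * PSeries d w.
Proof.
  intros Hlow Hhigh Hz Hw Hzw. apply ex_pseries_R in Hz, Hw.
  set (r := w / z).
  assert (Hr : 1 < r) by (apply Rlt_div_r; lra).
  set (e := fun k => z ^ m * (d k * w ^ k) - w ^ m * (d k * z ^ k)).
  assert (He_eq : forall k, e k = z ^ k * z ^ m * (d k * (r ^ k - r ^ m))).
  { intros k. unfold e. replace w with (r * z) by (unfold r; field; lra).
    rewrite !Rpow_mult_distr. ring. }
  assert (Hzkm : forall k, 0 < z ^ k * z ^ m) by (intros; apply Rmult_lt_0_compat; apply pow_lt; lra).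
  assert (He : forall k, 0 <= e k).
  { intros k. rewrite He_eq. apply Rmult_le_pos; [now left |].
    destruct (Compare_dec.lt_eq_lt_dec k m) as [[Hk | ->] | Hk].
    - pose proof (Rlt_pow r k m Hr Hk). pose proof (Hlow k Hk). nra.
    - lra.
    - pose proof (Rlt_pow r m k Hr Hk). pose proof (Hhigh k Hk). nra. }
  assert (Hem : 0 < e (S m)).
  { rewrite He_eq. apply Rmult_lt_0_compat; [apply Hzkm |].
    apply Rmult_lt_0_compat; [apply Hhigh; lia |].
    pose proof (Rlt_pow r m (S m) Hr ltac:(lia)). lra. }
  assert (Hex : ex_series e).
  { apply (@ex_series_minus R_AbsRing R_NormedModule);
      apply (@ex_series_scal_l R_AbsRing R_NormedModule); assumption. }
  pose proof (Series_gt_0 e (S m) He Hem Hex) as Hpos.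
  unfold e in Hpos. rewrite Series_minus, !Series_scal_l in Hpos
    by (apply (@ex_series_scal_l R_AbsRing R_NormedModule); assumption).
  unfold PSeries. lra.
Qed.

Lemma PSeries_lt_0 (d : nat -> R) (z : R) :
  (forall k, d k < 0) -> 0 < z -> ex_pseries d z -> PSeries d z < 0.
Proof.
  intros Hd Hz Hex.
  assert (Hpos : 0 < Series (fun k => - (d k * z ^ k))).
  { apply (Series_gt_0 _ 0).
    - intros k. pose proof (Hd k). pose proof (pow_lt z k Hz). nra.
    - pose proof (Hd 0%nat). simpl. lra.
    - apply (@ex_series_opp R_AbsRing R_NormedModule). now apply ex_pseries_R. }
  rewrite Series_opp in Hpos. unfold PSeries. lra.
Qed.

(* With lam the quotient at z, the coefficients a k - lam b k change sign exactly once. *)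
Lemma PSeries_quotient_increasing (a b : nat -> R) (z w : R) :
  (forall k, 0 < b k) -> (forall k, a k / b k < a (S k) / b (S k)) ->
  (forall x, ex_pseries a x) -> (forall x, ex_pseries b x) -> 0 < z < w ->
  PSeries a z / PSeries b z < PSeries a w / PSeries b w.
Proof.
  intros Hb Hc Ha_ex Hb_ex Hzw.
  assert (Hb_pos : forall x, 0 < x -> 0 < PSeries b x).
  { intros x Hx. apply (Series_gt_0 _ 0); [| simpl; rewrite Rmult_1_r; apply Hb | now apply ex_pseries_R].
    intros k. left. apply Rmult_lt_0_compat; [apply Hb | now apply pow_lt]. }
  set (lam := PSeries a z / PSeries b z).
  set (d := PS_minus a (PS_scal lam b)).
  assert (Hbl_ex : forall x, ex_pseries (PS_scal lam b) x).
  { intros x. apply ex_pseries_scal; [apply Rmult_comm | apply Hb_ex]. }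
  assert (Hd_ex : forall x, ex_pseries d x) by (intros x; apply ex_pseries_minus; auto).
  assert (Hd_val : forall x, PSeries d x = PSeries a x - lam * PSeries b x).
  { intros x. unfold d. now rewrite PSeries_minus, PSeries_scal. }
  assert (Hd_z : PSeries d z = 0).
  { rewrite Hd_val. unfold lam. field. apply Rgt_not_eq, Hb_pos. lra. }
  assert (Hd_sign : forall k, d k = b k * (a k / b k - lam)).
  { intros k. unfold d, PS_minus, PS_scal, plus, opp, scal; simpl. unfold mult; simpl.
    field. apply Rgt_not_eq, Hb. }
  assert (Hreach : exists k, lam <= a k / b k).
  { apply NNPP. intros Hnone.
    assert (Hneg : forall k, d k < 0).
    { intros k. rewrite Hd_sign. pose proof (Hb k).
      assert (a k / b k < lam) by (apply Rnot_le_lt; intros Hk; apply Hnone; now exists k).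
      nra. }
    pose proof (PSeries_lt_0 d z Hneg ltac:(lra) (Hd_ex z)). lra. }
  destruct (Wf_nat.dec_inh_nat_subset_has_unique_least_element (fun k => lam <= a k / b k))
    as (m & [Hm Hmin] & _); [intros k; destruct (Rle_dec lam (a k / b k)); tauto | exact Hreach |].
  assert (Hlow : forall k, (k < m)%nat -> d k <= 0).
  { intros k Hk. rewrite Hd_sign. pose proof (Hb k).
    assert (a k / b k < lam) by (apply Rnot_le_lt; intros Hk'; specialize (Hmin k Hk'); lia).
    nra. }
  assert (Hhigh : forall k, (m < k)%nat -> 0 < d k).
  { intros k Hk. rewrite Hd_sign. pose proof (Hb k).
    pose proof (strictly_increasing_lt (fun k => a k / b k) Hc m k Hk). simpl in *. nra. }
  pose proof (PSeries_sign_change_lt d m z w Hlow Hhigh (Hd_ex z) (Hd_ex w) Hzw) as Hlt.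
  rewrite Hd_z, Rmult_0_r, Hd_val in Hlt.
  assert (0 < PSeries a w - lam * PSeries b w) by (pose proof (pow_lt z m ltac:(lra)); nra).
  apply (Rlt_div_r lam); [apply Hb_pos; lra | lra].
Qed.
Definition inv_gamma_prod (p q : R) (k : nat) : R := / (Gamma (INR k + p) * Gamma (INR k + q)).

Section InvGammaProd.

Variables p q : R.
Hypotheses (Hp : 0 < p) (Hq : 0 < q).

Lemma inv_gamma_prod_pos (k : nat) : 0 < inv_gamma_prod p q k.
Proof.
  pose proof (pos_INR k). apply Rinv_0_lt_compat.
  apply Rmult_lt_0_compat; apply Gamma_pos; lra.
Qed.

Lemma inv_gamma_prod_succ (k : nat) :
  inv_gamma_prod p q (S k) = inv_gamma_prod p q k / ((INR k + p) * (INR k + q)).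
Proof.
  pose proof (pos_INR k). unfold inv_gamma_prod. rewrite S_INR.
  replace (INR k + 1 + p) with (INR k + p + 1) by ring.
  replace (INR k + 1 + q) with (INR k + q + 1) by ring.
  rewrite !Gamma_succ by lra.
  pose proof (Gamma_pos (INR k + p) ltac:(lra)). pose proof (Gamma_pos (INR k + q) ltac:(lra)).
  field. repeat split; apply Rgt_not_eq; lra.
Qed.

Lemma ex_pseries_inv_gamma_prod (x : R) : ex_pseries (inv_gamma_prod p q) x.
Proof.
  apply CV_radius_inside. rewrite CV_radius_infinite_DAlembert; [easy | |].
  - intros k. apply Rgt_not_eq, inv_gamma_prod_pos.
  - apply is_lim_seq_ext with (fun k => / ((INR k + p) * (INR k + q))).
    + intros k. pose proof (pos_INR k). pose proof (inv_gamma_prod_pos k).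
      rewrite inv_gamma_prod_succ.
      replace (inv_gamma_prod p q k / ((INR k + p) * (INR k + q)) / inv_gamma_prod p q k)
        with (/ ((INR k + p) * (INR k + q))) by (field; repeat split; apply Rgt_not_eq; lra).
      symmetry. apply Rabs_pos_eq. left. apply Rinv_0_lt_compat, Rmult_lt_0_compat; lra.
    + apply (is_lim_seq_inv _ p_infty); [| easy].
      apply (is_lim_seq_mult _ _ p_infty p_infty); [| | easy];
        (eapply is_lim_seq_plus; [apply is_lim_seq_INR | apply is_lim_seq_const | easy]).
Qed.

Lemma PSeries_inv_gamma_prod_pos (x : R) : 0 < x -> 0 < PSeries (inv_gamma_prod p q) x.
Proof.
  intros Hx. apply (Series_gt_0 _ 0).
  - intros k. left. apply Rmult_lt_0_compat; [apply inv_gamma_prod_pos | now apply pow_lt].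
  - simpl. rewrite Rmult_1_r. apply inv_gamma_prod_pos.
  - apply ex_pseries_R, ex_pseries_inv_gamma_prod.
Qed.

End InvGammaProd.

Lemma PSeries_inv_gamma_prod_quotient_increasing (p1 q1 p2 q2 z w : R) :
  0 < p1 -> 0 < q1 -> 0 < p2 -> 0 < q2 ->
  (forall k, (INR k + p1) * (INR k + q1) < (INR k + p2) * (INR k + q2)) -> 0 < z < w ->
  PSeries (inv_gamma_prod p1 q1) z / PSeries (inv_gamma_prod p2 q2) z
  < PSeries (inv_gamma_prod p1 q1) w / PSeries (inv_gamma_prod p2 q2) w.
Proof.
  intros Hp1 Hq1 Hp2 Hq2 Hprod Hzw.
  apply PSeries_quotient_increasing; auto using inv_gamma_prod_pos, ex_pseries_inv_gamma_prod.
  intros k. rewrite !inv_gamma_prod_succ by easy.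
  pose proof (pos_INR k). pose proof (Hprod k).
  pose proof (inv_gamma_prod_pos p1 q1 Hp1 Hq1 k). pose proof (inv_gamma_prod_pos p2 q2 Hp2 Hq2 k).
  set (P1 := (INR k + p1) * (INR k + q1)) in *. set (P2 := (INR k + p2) * (INR k + q2)) in *.
  assert (HP1 : 0 < P1) by (apply Rmult_lt_0_compat; lra).
  replace (inv_gamma_prod p1 q1 k / P1 / (inv_gamma_prod p2 q2 k / P2))
    with (inv_gamma_prod p1 q1 k / inv_gamma_prod p2 q2 k * (P2 / P1))
    by (field; repeat split; apply Rgt_not_eq; lra).
  assert (1 < P2 / P1) by (apply Rlt_div_r; lra).
  assert (0 < inv_gamma_prod p1 q1 k / inv_gamma_prod p2 q2 k) by (apply Rdiv_lt_0_compat; lra).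
  nra.
Qed.

Lemma Rpower_plus_double (x y : R) (n : nat) : 0 < x ->
  Rpower x (y + 2 * INR n) = Rpower x y * (x ^ 2) ^ n.
Proof.
  intros Hx. rewrite Rpower_plus, <- pow_mult, <- Rpower_pow by easy.
  now rewrite mult_INR.
Qed.

Lemma struveL_PSeries (nu x : R) : 0 < x ->
  struveL nu x = Rpower (x / 2) (nu + 1) * PSeries (inv_gamma_prod (3/2) (nu + 3/2)) ((x / 2) ^ 2).
Proof.
  intros Hx. unfold struveL, PSeries. rewrite <- Series_scal_l. apply Series_ext. intros k.
  replace (2 * INR k + nu + 1) with (nu + 1 + 2 * INR k) by ring.
  replace (INR k + nu + 3 / 2) with (INR k + (nu + 3 / 2)) by ring.
  rewrite Rpower_plus_double by lra. unfold inv_gamma_prod, Rdiv. ring.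
Qed.

Lemma lommel_t_PSeries (mu nu x : R) : 0 < x ->
  lommel_t mu nu x =
  Rpower (x / 2) (mu + 1) * PSeries (inv_gamma_prod ((mu - nu + 3) / 2) ((mu + nu + 3) / 2)) ((x / 2) ^ 2).
Proof.
  intros Hx. unfold lommel_t, PSeries. rewrite <- Series_scal_l. apply Series_ext. intros k.
  replace (mu + 2 * INR k + 1) with (mu + 1 + 2 * INR k) by ring.
  rewrite Rpower_plus_double by lra. unfold inv_gamma_prod, Rdiv. ring.
Qed.

Section Ratio.

Variables mu nu : R.
Hypotheses (Hnu : -3/2 < nu) (Hmunu : Rabs nu < mu + 3).

Lemma nu_bounds : nu < mu + 3 /\ - (mu + 3) < nu.
Proof. now apply Rabs_def2. Qed.

Lemma ratio_PSeries (x : R) : 0 < x ->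
  ratio mu nu x = Rpower 2 (mu - nu) *
    (PSeries (inv_gamma_prod (3/2) (nu + 3/2)) ((x / 2) ^ 2) /
     PSeries (inv_gamma_prod ((mu - nu + 3) / 2) ((mu + nu + 3) / 2)) ((x / 2) ^ 2)).
Proof.
  intros Hx. pose proof nu_bounds.
  unfold ratio. rewrite struveL_PSeries, lommel_t_PSeries by easy.
  assert (Hpow : Rpower x (mu - nu) * Rpower (x / 2) (nu + 1) = Rpower 2 (mu - nu) * Rpower (x / 2) (mu + 1)).
  { unfold Rpower. rewrite <- !exp_plus, ln_div by lra. f_equal. ring. }
  assert (0 < Rpower (x / 2) (mu + 1)) by apply exp_pos.
  assert (0 < PSeries (inv_gamma_prod ((mu - nu + 3) / 2) ((mu + nu + 3) / 2)) ((x / 2) ^ 2))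
    by (apply PSeries_inv_gamma_prod_pos; [lra | lra | apply pow_lt; lra]).
  rewrite <- Rmult_assoc, Hpow. field. split; apply Rgt_not_eq; lra.
Qed.

Lemma lommel_struve_prod_sub (k : nat) :
  (INR k + (mu - nu + 3) / 2) * (INR k + (mu + nu + 3) / 2) - (INR k + 3 / 2) * (INR k + (nu + 3 / 2))
  = (mu - nu) * (INR k + (mu + nu + 6) / 4).
Proof. field. Qed.

Lemma ratio_increasing (x y : R) : nu < mu -> 0 < x -> x < y -> ratio mu nu x < ratio mu nu y.
Proof.
  intros Hmu Hx Hxy. pose proof nu_bounds.
  rewrite !ratio_PSeries by lra. apply Rmult_lt_compat_l; [apply exp_pos |].
  apply PSeries_inv_gamma_prod_quotient_increasing; try lra.
  - intros k. pose proof (lommel_struve_prod_sub k). pose proof (pos_INR k).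
    assert (0 < (mu - nu) * (INR k + (mu + nu + 6) / 4)) by (apply Rmult_lt_0_compat; lra). lra.
  - split; [apply pow_lt; lra | simpl; nra].
Qed.

Lemma ratio_decreasing (x y : R) : mu < nu -> 0 < x -> x < y -> ratio mu nu y < ratio mu nu x.
Proof.
  intros Hmu Hx Hxy. pose proof nu_bounds.
  rewrite !ratio_PSeries by lra. apply Rmult_lt_compat_l; [apply exp_pos |].
  assert (Hxy2 : 0 < (x / 2) ^ 2 < (y / 2) ^ 2) by (split; [apply pow_lt; lra | simpl; nra]).
  rewrite <- !(Rinv_div (PSeries (inv_gamma_prod ((mu - nu + 3) / 2) ((mu + nu + 3) / 2)) _)).
  apply Rinv_lt_contravar.
  - apply Rmult_lt_0_compat; apply Rdiv_lt_0_compat; apply PSeries_inv_gamma_prod_pos; lra.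
  - apply PSeries_inv_gamma_prod_quotient_increasing; try lra.
    intros k. pose proof (lommel_struve_prod_sub k). pose proof (pos_INR k).
    assert (0 < (nu - mu) * (INR k + (mu + nu + 6) / 4)) by (apply Rmult_lt_0_compat; lra). lra.
Qed.

End Ratio.

Theorem theorem3p2 :
  (forall mu nu : R, -3/2 < nu < mu ->
     forall x y : R, 0 < x -> x < y -> ratio mu nu x < ratio mu nu y) /\
  (forall mu nu : R,
     ((-3 < mu <= -3/2 /\ Rabs nu < mu + 3) \/ (-3/2 < mu /\ mu < nu < mu + 3)) ->
     forall x y : R, 0 < x -> x < y -> ratio mu nu y < ratio mu nu x).
Proof.
  split.
  - intros mu nu Hmunu x y. apply ratio_increasing; try lra. apply Rabs_def1; lra.
  - intros mu nu [[Hmu Habs] | [Hmu Hnu]] x y.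
    + pose proof Habs as Hnu. apply Rabs_def2 in Hnu. apply ratio_decreasing; lra.
    + apply ratio_decreasing; try lra. apply Rabs_def1; lra.
Qed.
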